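(* Let $n\ge2$ and let $\Gamma:\mathbb{C}^n\to\mathbb{C}^n$ be a homogeneous quadratic polynomial map with real coefficients such that $\Gamma(x)$ and $x$ are linearly dependent for every $x\in C$. Then there exist $b\in\mathbb{R}^n$ and a real linear functional $\lambda$ on $\mathbb{R}^n$ such that $\Gamma(x)=(x,x)\,b+\lambda(x)\,x$ for all $x$.
   Context: $(\cdot,\cdot)$ denotes the standard Euclidean inner product on $\mathbb{R}^n$, extended to $\mathbb{C}^n$ complex-bilinearly; $\lambda$ is extended complex-linearly. The *asymptotic cone* is $C=\{x\in\mathbb{C}^n:(x,x)=0\}$. *)

From HB Require Import structures.
From mathcomp Require Import all_boot all_order all_algebra.
From mathcomp.real_closed Require Import complex.
Set Implicit Arguments. Unset Strict Implicit. Unset Printing Implicit Defensive.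
Import Order.TTheory GRing.Theory Num.Theory.
Local Open Scope ring_scope.

(* Vectors of C^n are row vectors 'rV[R[i]]_n, R a real closed field
   (e.g. the reals); a real number r is embedded as Complex r 0. *)
Definition rc (R : rcfType) (r : R) : R[i] := Complex r 0.

(* complex-bilinear extension of the Euclidean inner product *)
Definition cdot (R : rcfType) (n : nat) (x y : 'rV[R[i]]_n) : R[i] :=
  \sum_(i < n) x 0 i * y 0 i.

(* asymptotic cone C = {x in C^n : (x,x) = 0} *)
Definition asym_cone (R : rcfType) (n : nat) : pred 'rV[R[i]]_n :=
  fun x => cdot x x == 0.

Definition quad_map (R : rcfType) (n : nat) (c : 'I_n -> 'I_n -> 'I_n -> R)
  (x : 'rV[R[i]]_n) : 'rV[R[i]]_n :=
  \row_k \sum_(i < n) \sum_(j < n) rc (c k i j) * x 0 i * x 0 j.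

Definition rvec (R : rcfType) (n : nat) (b : 'I_n -> R) : 'rV[R[i]]_n :=
  \row_k rc (b k).

Definition rlin (R : rcfType) (n : nat) (l : 'I_n -> R) (x : 'rV[R[i]]_n) : R[i] :=
  \sum_(i < n) rc (l i) * x 0 i.

From HB Require Import structures.
From mathcomp Require Import all_boot all_order all_algebra.
From mathcomp.real_closed Require Import complex.
From mathcomp Require Import ring.
Set Implicit Arguments. Unset Strict Implicit. Unset Printing Implicit Defensive.
Import Order.TTheory GRing.Theory Num.Theory.
Local Open Scope ring_scope.
Local Open Scope complex_scope.

(* For p <> q the vector e_p + i e_q is isotropic, so Gamma maps it to a
   multiple of itself.  Comparing real and imaginary parts coordinatewise gives
   c_kpp = c_kqq and c_kpq + c_kqp = 0 for k outside {p, q}, and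
   c_qpq + c_qqp = c_ppp - c_pqq.  Hence, with b_k the common value of c_kpp
   over p <> k (this needs n >= 2) and l_k = c_kkk - b_k, the symmetrized
   coefficients are c_kij + c_kji = 2 b_k d_ij + l_i d_jk + l_j d_ik, which
   is exactly the coefficient pattern of (x,x) b + l(x) x. *)

Section DeltaSums.
Variables (S : comPzRingType) (n : nat) (x : 'I_n -> S).

Lemma sum_delta (F : 'I_n -> S) (p : 'I_n) : \sum_j (j == p)%:R * F j = F p.
Proof.
by rewrite (bigD1 p) //= eqxx mul1r big1 ?addr0 // => j /negbTE ->; rewrite mul0r.
Qed.

Lemma sum_quadratic_symmetrize (F : 'I_n -> 'I_n -> S) :
  (\sum_i \sum_j F i j * x i * x j) *+ 2
  = \sum_i \sum_j (F i j + F j i) * x i * x j.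
Proof.
rewrite mulr2n [X in _ + X]exchange_big -big_split /=.
by apply: eq_bigr => i _; rewrite -big_split; apply: eq_bigr => j _ /=; ring.
Qed.

Lemma sum_delta_diag (a : S) :
  \sum_i \sum_j (i == j)%:R * a * x i * x j = a * \sum_i x i * x i.
Proof.
rewrite mulr_sumr; apply: eq_bigr => i _.
rewrite -(sum_delta (fun j => a * (x i * x j))).
by apply: eq_bigr => j _; rewrite eq_sym; ring.
Qed.

Lemma sum_delta_snd (a : 'I_n -> S) (k : 'I_n) :
  \sum_i \sum_j (j == k)%:R * a i * x i * x j = (\sum_i a i * x i) * x k.
Proof.
rewrite mulr_suml; apply: eq_bigr => i _.
rewrite -(sum_delta (fun j => a i * x i * x j)).
by apply: eq_bigr => j _; ring.
Qed.

Lemma sum_delta_fst (a : 'I_n -> S) (k : 'I_n) :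
  \sum_i \sum_j (i == k)%:R * a j * x i * x j = (\sum_i a i * x i) * x k.
Proof.
rewrite exchange_big -sum_delta_snd; apply: eq_bigr => j _.
by apply: eq_bigr => i _; ring.
Qed.
End DeltaSums.

Lemma rcE (R : rcfType) (r : R) : rc r = r%:C.
Proof. by []. Qed.

Lemma quad_map_symmetric_form (R : rcfType) (n : nat)
    (c : 'I_n -> 'I_n -> 'I_n -> R) (b l : 'I_n -> R) :
  (forall k i j, c k i j + c k j i
     = (i == j)%:R * b k *+ 2 + (j == k)%:R * l i + (i == k)%:R * l j) ->
  forall x, quad_map c x = cdot x x *: rvec b + rlin l x *: x.
Proof.
move=> sym x; apply/rowP => k; rewrite !mxE [rc (b k)]rcE.
apply: (@pmulrnI _ 2) => //; rewrite sum_quadratic_symmetrize.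
under eq_bigr do under eq_bigr do
  rewrite !rcE -rmorphD sym !rmorphD !rmorphM !rmorph_nat !mulrDl.
under eq_bigr do rewrite !big_split.
rewrite !big_split /= !sum_delta_diag sum_delta_snd sum_delta_fst.
by rewrite -/(rlin l x) -/(cdot x x); ring.
Qed.

Section Isotropic.
Variables (R : rcfType) (n : nat) (c : 'I_n -> 'I_n -> 'I_n -> R).
Implicit Types p q k : 'I_n.

Definition isotropic_pair p q : 'rV[R[i]]_n :=
  \row_j ((j == p)%:R + (j == q)%:R * 'i).

Lemma sum_isotropic_pair (F : 'I_n -> R[i]) p q :
  \sum_j F j * isotropic_pair p q 0 j = F p + F q * 'i.
Proof.
rewrite (eq_bigr (fun j => (j == p)%:R * F j + (j == q)%:R * (F j * 'i))).
  by rewrite big_split /= !sum_delta.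
by move=> j _; rewrite mxE; ring.
Qed.

Lemma isotropic_pair_cone p q : p != q -> isotropic_pair p q \in @asym_cone R n.
Proof.
move=> pq; rewrite unfold_in /asym_cone /cdot sum_isotropic_pair !mxE !eqxx.
by rewrite [q == p]eq_sym (negbTE pq) mul0r mul1r !addr0 add0r -expr2 sqr_i addrN.
Qed.

Lemma quad_map_isotropic_pair p q k :
  quad_map c (isotropic_pair p q) 0 k
  = (c k p p - c k q q) +i* (c k p q + c k q p).
Proof.
rewrite mxE; under eq_bigr do rewrite sum_isotropic_pair mulrAC -mulrDl.
by rewrite sum_isotropic_pair /rc; simpc.
Qed.

Hypothesis cone_dependent : forall x : 'rV[R[i]]_n, x \in @asym_cone R n ->
  ~~ free [:: quad_map c x; x].

Lemma quad_map_isotropic_pair_eigen p q : p != q ->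
  exists a, quad_map c (isotropic_pair p q) = a *: isotropic_pair p q.
Proof.
move=> pq; have := cone_dependent (isotropic_pair_cone pq).
rewrite free_cons seq1_free span_seq1 negb_and !negbK.
case/orP => [/vlineP [a ->] | /eqP /rowP /(_ p)]; first by exists a.
by rewrite !mxE eqxx (negbTE pq) mul0r addr0 => /eqP; rewrite oner_eq0.
Qed.

Lemma coef_outside_pair p q k : p != q -> p != k -> q != k ->
  c k p p = c k q q /\ c k p q + c k q p = 0.
Proof.
move=> pq pk qk; have [a /rowP /(_ k)] := quad_map_isotropic_pair_eigen pq.
rewrite quad_map_isotropic_pair !mxE ![k == _]eq_sym (negbTE pk) (negbTE qk).
by rewrite mul0r addr0 mulr0; case=> /eqP; rewrite subr_eq0 => /eqP.
Qed.

Lemma coef_on_pair p q : p != q -> c q p q + c q q p = c p p p - c p q q.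
Proof.
move=> pq; have [a /rowP eig] := quad_map_isotropic_pair_eigen pq.
have := eig q; have := eig p.
rewrite !quad_map_isotropic_pair !mxE !eqxx [q == p]eq_sym (negbTE pq).
rewrite mul0r mul1r add0r addr0 mulr1 => <-.
by simpc; case.
Qed.

Lemma offdiag_coef_symmetric_form (b : 'I_n -> R) :
  (forall k p, p != k -> c k p p = b k) ->
  forall k i j, c k i j + c k j i = (i == j)%:R * b k *+ 2
    + (j == k)%:R * (c i i i - b i) + (i == k)%:R * (c j j j - b j).
Proof.
move=> diag k i j; have [<-|ij] := eqVneq i j.
  have [->|ik] := eqVneq i k; first by rewrite /=; ring.
  by rewrite diag //=; ring.
have [<-|jk] := eqVneq j k.
  by rewrite (negbTE ij) (coef_on_pair ij) (diag i j) 1?eq_sym //=; ring.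
have [->|ik] := eqVneq i k.
  by rewrite addrC (coef_on_pair jk) (diag j k) 1?eq_sym //=; ring.
by have [_ ->] := coef_outside_pair ij ik jk; rewrite /=; ring.
Qed.
End Isotropic.

Theorem lemma3 (R : rcfType) (n : nat) (c : 'I_n -> 'I_n -> 'I_n -> R) :
  (2 <= n)%N ->
  (forall x : 'rV[R[i]]_n, x \in @asym_cone R n ->
     ~~ free [:: quad_map c x; x]) ->
  exists (b : 'I_n -> R) (l : 'I_n -> R),
    forall x : 'rV[R[i]]_n,
      quad_map c x = cdot x x *: rvec b + rlin l x *: x.
Proof.
case: n c => [|[|m]] c // _ cone_dependent.
pose other (k : 'I_m.+2) : 'I_m.+2 := if k == ord0 then ord_max else ord0.
have other_neq k : other k != k.
  by rewrite /other; case: ifP => [/eqP -> // | /negbT]; rewrite eq_sym.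
pose b k := c k (other k) (other k).
have diag k p : p != k -> c k p p = b k.
  move=> pk; have [-> // | p_other] := eqVneq p (other k).
  by case: (coef_outside_pair cone_dependent p_other pk (other_neq k)).
exists b, (fun k => c k k k - b k).
exact/quad_map_symmetric_form/(offdiag_coef_symmetric_form cone_dependent diag).
Qed.
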